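(* $\mathrm{ChrMem}(\mathrm{RL}) > 1$.
   Context: Let $\Omega=\mathbb{N}\times\{0,1\}$ with partial order $(n,a)\preceq(m,b)$ iff $(n,a)=(m,b)$ or $n<m$. Let $\mathbb{M}$ be the set of all functions $f\colon\Omega\to\Omega$ monotone w.r.t. $\preceq$. The Rope Ladder condition $\mathrm{RL}\subseteq\mathbb{M}^\omega$ (a winning condition over the color set $\mathbb{M}$) consists of all sequences $(f_1,f_2,\ldots)\in\mathbb{M}^\omega$ for which there is $(N,b)\in\Omega$ with $f_n\circ\cdots\circ f_1((0,0))\preceq(N,b)$ for all $n\ge1$. Arenas, strategies and memory: an arena over a color set $C$ is a tuple $\langle V_P, V_A, E\rangle$ of finite sets with $V_P\cap V_A=\varnothing$, $V=V_P\cup V_A\neq\varnothing$, $E\subseteq V\times C\times V$, every node having an outgoing edge. Paths are non-empty finite/infinite sequences of consecutive edges, plus $0$-length paths $\lambda_v$ at each node. A Protagonist's strategy maps each finite path ending in $V_P$ to an outgoing edge of its last node; consistency of paths with a strategy is defined in the usual way. $S$ is winning from $u$ w.r.t. $W\subseteq C^\omega$ if every infinite path consistent with $S$ from $u$ has color sequence in $W$; $S$ is optimal w.r.t. $W$ if there is no node from which some strategy wins w.r.t. $W$ but $S$ does not. A memory structure is $\langle M,m_{init},\delta\rangle$ with $M$ finite and $\delta\colon M\times E\to M$ (extended to finite edge sequences); it is chromatic if $\delta(m,e)$ depends only on $m$ and the color of $e$. A strategy is built on top of it if its choice after a finite path depends only on the last node and the memory state reached from $m_{init}$ on that path. $\mathrm{ChrMem}(W)$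 is the least $k\in\mathbb{Z}^+$ such that every arena over $C$ admits a Protagonist's strategy built on top of a chromatic memory structure with $k$ states that is optimal w.r.t. $W$ ($+\infty$ if none exists). *)

From mathcomp Require Import all_boot.
Set Implicit Arguments. Unset Strict Implicit. Unset Printing Implicit Defensive.

(* ---------- The poset Omega = N x {0,1} (bit 0 = false, 1 = true) ---------- *)
Definition Omega : Type := (nat * bool)%type.

Definition omega_le (x y : Omega) : Prop := x = y \/ (x.1 < y.1)%N.

Definition omega_monotone (f : Omega -> Omega) : Prop :=
  forall x y, omega_le x y -> omega_le (f x) (f y).

Definition MM : Type := {f : Omega -> Omega | omega_monotone f}.

(* comp_seq s n = f_{n+1} o ... o f_1 ((0,0)), where s k = f_{k+1}. *)
Fixpoint comp_seq (s : nat -> MM) (n : nat) : Omega :=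
  match n with
  | 0 => proj1_sig (s 0) (0, false)
  | n'.+1 => proj1_sig (s n) (comp_seq s n')
  end.

(* The Rope Ladder winning condition (sequences indexed from 0 here). *)
Definition RL (s : nat -> MM) : Prop :=
  exists (N : nat) (b : bool), forall n, omega_le (comp_seq s n) (N, b).

Record arena (C : Type) := Arena {
  vert : finType;
  edge : finType;
  isP : vert -> bool;             (* true: V_P (Protagonist), false: V_A *)
  src : edge -> vert;
  col : edge -> C;
  tgt : edge -> vert
}.

Definition wf_arena (C : Type) (A : arena C) : Prop :=
  (exists v : vert A, True) /\
  (forall v : vert A, exists e : edge A, src e = v) /\
  (* E is a set of triples: distinct edges are distinct triples *)
  (forall e1 e2 : edge A,
      src e1 = src e2 -> col e1 = col e2 -> tgt e1 = tgt e2 -> e1 = e2).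

Section Games.
Variables (C : Type) (A : arena C).

(* finite path: start node v and list of edges (nil = lambda_v) *)
Fixpoint fpath (v : vert A) (p : seq (edge A)) : Prop :=
  match p with
  | [::] => True
  | e :: p' => src e = v /\ fpath (tgt e) p'
  end.

Fixpoint lastv (v : vert A) (p : seq (edge A)) : vert A :=
  match p with
  | [::] => v
  | e :: p' => lastv (tgt e) p'
  end.

Definition ipath (u : vert A) (rho : nat -> edge A) : Prop :=
  src (rho 0) = u /\ forall n, tgt (rho n) = src (rho n.+1).

Definition prefix (rho : nat -> edge A) (n : nat) : seq (edge A) :=
  [seq rho i | i <- iota 0 n].

(* A (total) function on finite paths; a strategy when valid. *)
Definition strat := vert A -> seq (edge A) -> edge A.

Definition valid_strat (S : strat) : Prop :=
  forall v p, fpath v p -> isP (lastv v p) -> src (S v p) = lastv v p.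

Definition consistent (S : strat) (u : vert A) (rho : nat -> edge A) : Prop :=
  forall n, isP (lastv u (prefix rho n)) -> rho n = S u (prefix rho n).

Definition winning_from (W : (nat -> C) -> Prop) (S : strat) (u : vert A) : Prop :=
  forall rho, ipath u rho -> consistent S u rho -> W (fun n => col (rho n)).

Definition optimal (W : (nat -> C) -> Prop) (S : strat) : Prop :=
  forall u : vert A,
    (exists S', valid_strat S' /\ winning_from W S' u) -> winning_from W S u.

(* chromatic memory with states 'I_k: m_init and delta : 'I_k -> C -> 'I_k *)
Definition mem_upd (k : nat) (delta : 'I_k -> C -> 'I_k) (m : 'I_k)
  (p : seq (edge A)) : 'I_k :=
  foldl (fun m e => delta m (col e)) m p.

Definition built_on (k : nat) (minit : 'I_k) (delta : 'I_k -> C -> 'I_k)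
  (S : strat) : Prop :=
  exists nxt : vert A -> 'I_k -> edge A,
    forall v p, fpath v p -> isP (lastv v p) ->
      S v p = nxt (lastv v p) (mem_upd delta minit p).

End Games.

(* ChrMem(W) is the least such k >= 1; so ChrMem(W) > 1 iff ~ ChrMemBound W 1. *)
Definition ChrMemBound (C : Type) (W : (nat -> C) -> Prop) (k : nat) : Prop :=
  forall A : arena C, wf_arena A ->
    exists (minit : 'I_k) (delta : 'I_k -> C -> 'I_k) (S : strat A),
      valid_strat S /\ built_on minit delta S /\ optimal W S.

From mathcomp Require Import all_boot zify.
(* After all_boot, so that the game-theoretic [fpath] and [prefix] shadow path.fpath and seq.prefix. *)
Set Implicit Arguments. Unset Strict Implicit. Unset Printing Implicit Defensive.

(* Take the arena with one Protagonist node and two self-loops, coloured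
   [ladder true] and [ladder false]: [ladder c] climbs one rung exactly from a
   position with bit [c] and lands on bit [c].  Alternating the two loops
   keeps the position in {(0,0), (0,1)}, so Protagonist can win; but a
   strategy with one memory state is positional, hence repeats one loop
   forever, and the position climbs to infinity. *)

Lemma eq_comp_seq (s t : nat -> MM) : s =1 t -> comp_seq s =1 comp_seq t.
Proof. by move=> eq_st; elim=> [|n IHn] /=; rewrite eq_st ?IHn. Qed.

Lemma eq_RL (s t : nat -> MM) : s =1 t -> RL s -> RL t.
Proof.
move=> /eq_comp_seq eq_st [N [b bounded]].
by exists N, b => n; rewrite -eq_st.
Qed.

Definition ladder_step (c : bool) (x : Omega) : Omega :=
  ((if x.2 == c then x.1.+1 else x.1), c).

Lemma ladder_step_mono (c : bool) : omega_monotone (ladder_step c).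
Proof.
move=> [n a] [m b] [->|/= lt_nm]; first by left.
rewrite /omega_le /ladder_step /=.
have [eq_m|ne_m] := eqVneq m n.+1.
  by case: eqP => ac; case: eqP => bc; [right; lia|left; rewrite eq_m|right; lia..].
by right; case: eqP; case: eqP => /=; lia.
Qed.

Definition ladder (c : bool) : MM := exist _ (ladder_step c) (ladder_step_mono c).

Lemma ladder_inj : injective ladder.
Proof. by move=> c1 c2 /(f_equal (fun f : MM => (proj1_sig f (0, false)).2)). Qed.

Lemma comp_seq_ladder_const (c : bool) (n : nat) :
  comp_seq (fun=> ladder c) n = (n + ~~ c, c).
Proof.
elim: n => [|n IHn] /=; first by case: c.
by rewrite IHn /ladder_step /= eqxx addSn.
Qed.

Lemma not_RL_ladder_const (c : bool) : ~ RL (fun=> ladder c).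
Proof.
move=> [N [b bounded]]; have := bounded N.+1.
by rewrite comp_seq_ladder_const /omega_le => -[[]|/=]; lia.
Qed.

Lemma comp_seq_ladder_alternating (n : nat) :
  comp_seq (fun k => ladder (~~ odd k)) n = (0, ~~ odd n).
Proof.
elim: n => [|n IHn] //=.
by rewrite IHn /ladder_step /=; case: (odd n).
Qed.

Lemma RL_ladder_alternating : RL (fun k => ladder (~~ odd k)).
Proof. by exists 1, false => n; rewrite comp_seq_ladder_alternating; right. Qed.

Section OneStateMemory.
Variables (C : Type) (A : arena C).

Lemma built_on_ord1_positional (minit : 'I_1) (delta : 'I_1 -> C -> 'I_1)
    (S : strat A) :
  built_on minit delta S ->
  exists nxt : vert A -> edge A,
    forall v p, fpath v p -> isP (lastv v p) -> S v p = nxt (lastv v p).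
Proof.
move=> [nxt memS]; exists (nxt^~ ord0) => v p pathp Plast.
by rewrite memS // ord1.
Qed.

Lemma size_prefix (rho : nat -> edge A) (n : nat) : size (prefix rho n) = n.
Proof. by rewrite size_map size_iota. Qed.

End OneStateMemory.

Definition two_loops : arena MM :=
  @Arena MM unit bool (fun=> true) (fun=> tt) ladder (fun=> tt).

Lemma wf_two_loops : wf_arena two_loops.
Proof.
split; first by exists tt.
split; first by move=> []; exists true.
by move=> e1 e2 _ /ladder_inj.
Qed.

Lemma fpath_two_loops (v : unit) (p : seq bool) : fpath (A:=two_loops) v p.
Proof. by elim: p v => [|e p IHp] [] //=; split=> //; case: (src _). Qed.

Lemma ipath_two_loops (rho : nat -> bool) : ipath (A:=two_loops) tt rho.
Proof. by []. Qed.

Lemma alternating_winning :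
  exists S : strat two_loops, valid_strat S /\ winning_from RL S tt.
Proof.
exists (fun _ p => ~~ odd (size p)); split.
  by move=> v p _ _; case: (src _); case: (lastv _ _).
move=> rho _ consistent_rho; apply: eq_RL RL_ladder_alternating => k /=.
by rewrite consistent_rho // size_prefix.
Qed.

Theorem fact1 : ~ ChrMemBound RL 1.
Proof.
move=> bound.
have [minit [delta [S [_ [memS optS]]]]] := bound _ wf_two_loops.
have [nxt positional] := built_on_ord1_positional memS.
have winS : winning_from RL S tt := optS tt alternating_winning.
apply: (not_RL_ladder_const (c := nxt tt)).
apply: (winS (fun=> nxt tt)); first exact: ipath_two_loops.
move=> n _; rewrite positional //; last exact: fpath_two_loops.
by case: (lastv _ _).
Qed.
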